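(* Let $G$ be a group, let $S=\bigoplus_{g\in G}S_g$ be an epsilon-strongly $G$-graded ring, and let $I$ be a homogeneous ideal of $S$. Then the natural $G$-grading $S/I=\bigoplus_{g\in G}(S_g+I)/I$ of the factor ring is epsilon-strong.
   Context: Rings are associative, not necessarily unital; $XY$ denotes finite sums of products. A $G$-grading: $S=\bigoplus_gS_g$, $S_gS_h\subseteq S_{gh}$. The grading is epsilon-strong if $S_gS_{g^{-1}}S_g=S_g$ for all $g$ and each ring $S_gS_{g^{-1}}$ has a multiplicative identity element. An ideal $I$ is homogeneous if $I=\bigoplus_{g\in G}(I\cap S_g)$. *)

From Stdlib Require Import List ClassicalEpsilon.
Import ListNotations.


Record group_ops := GroupOps {
  gcar :> Type;
  gmul : gcar -> gcar -> gcar;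
  ginv : gcar -> gcar;
  gone : gcar }.
Arguments gmul {g} _ _.
Arguments ginv {g} _.

Definition is_group (G : group_ops) : Prop :=
  (forall a b c : G, gmul a (gmul b c) = gmul (gmul a b) c) /\
  (forall a : G, gmul (gone G) a = a /\ gmul a (gone G) = a) /\
  (forall a : G, gmul (ginv a) a = gone G /\ gmul a (ginv a) = gone G).

Record rng_ops := RngOps {
  rcar :> Type;
  rzero : rcar;
  radd : rcar -> rcar -> rcar;
  ropp : rcar -> rcar;
  rmul : rcar -> rcar -> rcar }.
Arguments radd {r} _ _.
Arguments ropp {r} _.
Arguments rmul {r} _ _.

Definition is_rng (R : rng_ops) : Prop :=
  (forall a b c : R, radd a (radd b c) = radd (radd a b) c) /\
  (forall a b : R, radd a b = radd b a) /\
  (forall a : R, radd (rzero R) a = a) /\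
  (forall a : R, radd (ropp a) a = rzero R) /\
  (forall a b c : R, rmul a (rmul b c) = rmul (rmul a b) c) /\
  (forall a b c : R, rmul a (radd b c) = radd (rmul a b) (rmul a c)) /\
  (forall a b c : R, rmul (radd a b) c = radd (rmul a c) (rmul b c)).

Definition rsum {R : rng_ops} (l : list R) : R := fold_right (@radd R) (rzero R) l.
Arguments rsum {R} l.

Definition add_subgroup {R : rng_ops} (A : R -> Prop) : Prop :=
  A (rzero R) /\ (forall x y, A x -> A y -> A (radd x y)) /\ (forall x, A x -> A (ropp x)).

Definition prod2 {R : rng_ops} (X Y : R -> Prop) : R -> Prop :=
  fun z => exists l : list (R * R),
    (forall p, In p l -> X (fst p) /\ Y (snd p)) /\
    z = rsum (map (fun p => rmul (fst p) (snd p)) l).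

Definition prod3 {R : rng_ops} (X Y Z : R -> Prop) : R -> Prop :=
  fun w => exists l : list (R * R * R),
    (forall p, In p l -> X (fst (fst p)) /\ Y (snd (fst p)) /\ Z (snd p)) /\
    w = rsum (map (fun p => rmul (rmul (fst (fst p)) (snd (fst p))) (snd p)) l).

Definition has_identity {R : rng_ops} (X : R -> Prop) : Prop :=
  exists e, X e /\ forall x, X x -> rmul e x = x /\ rmul x e = x.

Definition is_grading {R : rng_ops} {G : group_ops} (C : G -> R -> Prop) : Prop :=
  (forall g, add_subgroup (C g)) /\
  (forall g h x y, C g x -> C h y -> C (gmul g h) (rmul x y)) /\
  (forall x : R, exists l : list (G * R),
      NoDup (map fst l) /\ (forall p, In p l -> C (fst p) (snd p)) /\
      x = rsum (map snd l)) /\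
  (forall l : list (G * R),
      NoDup (map fst l) -> (forall p, In p l -> C (fst p) (snd p)) ->
      rsum (map snd l) = rzero R -> forall p, In p l -> snd p = rzero R).

Definition epsilon_strong {R : rng_ops} {G : group_ops} (C : G -> R -> Prop) : Prop :=
  is_grading C /\
  forall g : G,
    (forall x, prod3 (C g) (C (ginv g)) (C g) x <-> C g x) /\
    has_identity (prod2 (C g) (C (ginv g))).

Definition is_ideal {R : rng_ops} (I : R -> Prop) : Prop :=
  add_subgroup I /\ (forall s x, I x -> I (rmul s x)) /\ (forall s x, I x -> I (rmul x s)).

Definition homogeneous {R : rng_ops} {G : group_ops} (C : G -> R -> Prop) (I : R -> Prop) : Prop :=
  forall x, I x -> exists l : list (G * R),
    NoDup (map fst l) /\ (forall p, In p l -> I (snd p) /\ C (fst p) (snd p)) /\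
    x = rsum (map snd l).

Definition coset {R : rng_ops} (I : R -> Prop) (s : R) : R -> Prop :=
  fun t => I (radd t (ropp s)).

Definition qcar {R : rng_ops} (I : R -> Prop) : Type :=
  { A : R -> Prop | exists s, A = coset I s }.

Definition qcls {R : rng_ops} (I : R -> Prop) (s : R) : qcar I :=
  exist _ (coset I s) (ex_intro _ s eq_refl).

Definition qrep {R : rng_ops} (I : R -> Prop) (A : qcar I) : R :=
  proj1_sig (constructive_indefinite_description _ (proj2_sig A)).

Definition quot {R : rng_ops} (I : R -> Prop) : rng_ops :=
  @RngOps (qcar I) (qcls I (rzero R))
    (fun A B => qcls I (radd (qrep I A) (qrep I B)))
    (fun A => qcls I (ropp (qrep I A)))
    (fun A B => qcls I (rmul (qrep I A) (qrep I B))).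

Definition quot_grading {R : rng_ops} {G : group_ops} (C : G -> R -> Prop) (I : R -> Prop)
  : G -> quot I -> Prop :=
  fun g A => exists s, C g s /\ A = qcls I s.

(* The grading of S/I is the image of the grading of S under the quotient map
   q : S -> S/I, which is surjective and preserves sums and products.  Both
   epsilon-strong conditions concern finite sums of products of homogeneous
   elements, and q maps S_g S_{g^-1} S_g onto the corresponding product in S/I
   and the identity of S_g S_{g^-1} to an identity of its image.  Homogeneity of I = ker q is needed only for the sum
   S/I = (+)_g (S_g + I)/I to be direct: if a sum of homogeneous s_g of
   distinct degrees lies in I, it is also a sum of homogeneous t_g in I, and
   comparing components of degree g gives s_g = t_g in I. *)
From Stdlib Require Import List ClassicalEpsilon FunctionalExtensionality PropExtensionality ProofIrrelevance.
Import ListNotations.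

Definition group_eq_dec {G : group_ops} (a b : G) : {a = b} + {a <> b} :=
  excluded_middle_informative (a = b).

Definition image {A B : Type} (f : A -> B) (X : A -> Prop) : B -> Prop :=
  fun y => exists x, X x /\ y = f x.

Section NonUnitalRing.
Variable S : rng_ops.
Hypothesis HS : is_rng S.

Lemma addrA (a b c : S) : radd a (radd b c) = radd (radd a b) c.
Proof. apply HS. Qed.
Lemma addrC (a b : S) : radd a b = radd b a.
Proof. apply HS. Qed.
Lemma add0r (a : S) : radd (rzero S) a = a.
Proof. apply HS. Qed.
Lemma addNr (a : S) : radd (ropp a) a = rzero S.
Proof. apply HS. Qed.
Lemma mulrDr (a b c : S) : rmul a (radd b c) = radd (rmul a b) (rmul a c).
Proof. apply HS. Qed.
Lemma mulrDl (a b c : S) : rmul (radd a b) c = radd (rmul a c) (rmul b c).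
Proof. apply HS. Qed.

Lemma addr0 (a : S) : radd a (rzero S) = a.
Proof. rewrite addrC; apply add0r. Qed.
Lemma addrN (a : S) : radd a (ropp a) = rzero S.
Proof. rewrite addrC; apply addNr. Qed.
Lemma addKr (a b : S) : radd (ropp a) (radd a b) = b.
Proof. rewrite addrA, addNr; apply add0r. Qed.
Lemma addrI (a b c : S) : radd a b = radd a c -> b = c.
Proof. intros E; rewrite <- (addKr a b), E; apply addKr. Qed.
Lemma subr0_eq (a b : S) : radd a (ropp b) = rzero S -> a = b.
Proof. intros E; apply (addrI (ropp b)); rewrite addNr, addrC; exact E. Qed.
Lemma opprK (a : S) : ropp (ropp a) = a.
Proof. apply (addrI (ropp a)); rewrite addrN; symmetry; apply addNr. Qed.
Lemma oppr0 : ropp (rzero S) = rzero S.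
Proof. rewrite <- (add0r (ropp (rzero S))); apply addrN. Qed.
Lemma opprD (a b : S) : ropp (radd a b) = radd (ropp a) (ropp b).
Proof.
  apply (addrI (radd a b)); rewrite addrN.
  rewrite (addrC (ropp a)), addrA, <- (addrA a), addrN, addr0, addrN; reflexivity.
Qed.
Lemma opprB (a b : S) : ropp (radd a (ropp b)) = radd b (ropp a).
Proof. rewrite opprD, opprK; apply addrC. Qed.
Lemma mul0r (a : S) : rmul (rzero S) a = rzero S.
Proof. apply (addrI (rmul (rzero S) a)); rewrite <- mulrDl, add0r, addr0; reflexivity. Qed.
Lemma mulr0 (a : S) : rmul a (rzero S) = rzero S.
Proof. apply (addrI (rmul a (rzero S))); rewrite <- mulrDr, add0r, addr0; reflexivity. Qed.
Lemma mulNr (a b : S) : rmul (ropp a) b = ropp (rmul a b).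
Proof. apply (addrI (rmul a b)); rewrite <- mulrDl, addrN, addrN; apply mul0r. Qed.
Lemma mulrN (a b : S) : rmul a (ropp b) = ropp (rmul a b).
Proof. apply (addrI (rmul a b)); rewrite <- mulrDr, addrN, addrN; apply mulr0. Qed.

Lemma subr_trans (t a b : S) :
  radd t (ropp b) = radd (radd t (ropp a)) (radd a (ropp b)).
Proof. rewrite <- addrA, addKr; reflexivity. Qed.
Lemma subrDD (r1 r2 a b : S) :
  radd (radd r1 r2) (ropp (radd a b)) = radd (radd r1 (ropp a)) (radd r2 (ropp b)).
Proof.
  rewrite opprD, <- !(addrA r1); f_equal.
  rewrite !addrA; f_equal; apply addrC.
Qed.
Lemma subrMM (r1 r2 a b : S) :
  radd (rmul r1 r2) (ropp (rmul a b)) =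
  radd (rmul (radd r1 (ropp a)) r2) (rmul a (radd r2 (ropp b))).
Proof. rewrite mulrDl, mulrDr, mulNr, mulrN, <- addrA, addKr; reflexivity. Qed.

Lemma rsum_app (l1 l2 : list S) : rsum (l1 ++ l2) = radd (rsum l1) (rsum l2).
Proof.
  induction l1 as [|x l IH]; simpl.
  - symmetry; apply add0r.
  - rewrite IH; apply addrA.
Qed.

Lemma rsum_map_add {A : Type} (f h : A -> S) (l : list A) :
  rsum (map (fun x => radd (f x) (h x)) l) = radd (rsum (map f l)) (rsum (map h l)).
Proof.
  induction l as [|x l IH]; simpl.
  - symmetry; apply add0r.
  - rewrite IH, <- !(addrA (f x)); f_equal.
    rewrite !addrA; f_equal; apply addrC.
Qed.

Lemma rsum_map_opp {A : Type} (f : A -> S) (l : list A) :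
  rsum (map (fun x => ropp (f x)) l) = ropp (rsum (map f l)).
Proof.
  induction l as [|x l IH]; simpl.
  - symmetry; apply oppr0.
  - rewrite IH, opprD; reflexivity.
Qed.

Lemma rsum_map_eq0 {A : Type} (f : A -> S) (l : list A) :
  (forall x, In x l -> f x = rzero S) -> rsum (map f l) = rzero S.
Proof.
  induction l as [|x l IH]; intros Hf; simpl; [reflexivity|].
  rewrite Hf by (left; reflexivity).
  rewrite IH by (intros; apply Hf; right; assumption).
  apply add0r.
Qed.

Section Quotient.
Variable I : S -> Prop.
Hypothesis HI : is_ideal I.

Lemma qcls_eqP (a b : S) : qcls I a = qcls I b <-> I (radd a (ropp b)).
Proof.
  destruct HI as ((I0 & ID & IN) & _).
  split; intros Hab.
  - apply (f_equal (@proj1_sig _ _)) in Hab; simpl in Hab.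
    change (coset I b a); rewrite <- Hab; unfold coset; rewrite addrN; exact I0.
  - apply subset_eq_compat; extensionality t; apply propositional_extensionality.
    unfold coset; split; intros Ht.
    + rewrite (subr_trans t a b); auto.
    + rewrite (subr_trans t b a), <- (opprB a b); auto.
Qed.

Lemma qcls_kernel (x : S) : qcls I x = rzero (quot I) <-> I x.
Proof.
  change (qcls I x = qcls I (rzero S) <-> I x).
  rewrite qcls_eqP, oppr0, addr0; reflexivity.
Qed.

Lemma qclsK (A : quot I) : qcls I (qrep I A) = A.
Proof.
  destruct A as [P HP]; unfold qrep; simpl.
  destruct (constructive_indefinite_description _ HP) as [s Hs]; simpl.
  apply subset_eq_compat; symmetry; exact Hs.
Qed.

Lemma qrep_qcls (a : S) : I (radd (qrep I (qcls I a)) (ropp a)).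
Proof. apply qcls_eqP, qclsK. Qed.

Lemma qcls_add (a b : S) :
  qcls I (radd a b) = @radd (quot I) (qcls I a) (qcls I b).
Proof.
  symmetry; simpl; apply qcls_eqP; rewrite subrDD.
  apply HI; apply qrep_qcls.
Qed.

Lemma qcls_opp (a : S) : qcls I (ropp a) = @ropp (quot I) (qcls I a).
Proof.
  symmetry; simpl; apply qcls_eqP; rewrite <- opprD.
  apply HI, qrep_qcls.
Qed.

Lemma qcls_mul (a b : S) :
  qcls I (rmul a b) = @rmul (quot I) (qcls I a) (qcls I b).
Proof.
  symmetry; simpl; apply qcls_eqP; rewrite subrMM.
  destruct HI as ((_ & ID & _) & IMl & IMr).
  apply ID; [apply IMr | apply IMl]; apply qrep_qcls.
Qed.

End Quotient.

Section GradedRng.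
Variable G : group_ops.
Variable C : G -> S -> Prop.
Hypothesis HC : is_grading C.

Definition component (l : list (G * S)) (g : G) : S :=
  rsum (map (fun p => if group_eq_dec (fst p) g then snd p else rzero S) l).

Lemma component_cons (h : G) (x : S) (l : list (G * S)) (g : G) :
  component ((h, x) :: l) g = radd (if group_eq_dec h g then x else rzero S) (component l g).
Proof. reflexivity. Qed.

Lemma component_closed (P : S -> Prop) (l : list (G * S)) (g : G) :
  P (rzero S) -> (forall x y, P x -> P y -> P (radd x y)) ->
  (forall p, In p l -> fst p = g -> P (snd p)) -> P (component l g).
Proof.
  intros P0 PD. induction l as [|[h x] l IH]; intros Hl; [exact P0|].
  rewrite component_cons; apply PD.
  - destruct (group_eq_dec h g) as [<-|_]; [apply (Hl (h, x)); simpl; auto | exact P0].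
  - apply IH; intros p Hp; apply Hl; right; exact Hp.
Qed.

Lemma component_notin (l : list (G * S)) (g : G) :
  ~ In g (map fst l) -> component l g = rzero S.
Proof.
  intros Hg; apply rsum_map_eq0; intros p Hp.
  destruct (group_eq_dec (fst p) g) as [<-|_]; [|reflexivity].
  exfalso; apply Hg, in_map, Hp.
Qed.

Lemma component_of_In (l : list (G * S)) (g : G) (s : S) :
  NoDup (map fst l) -> In (g, s) l -> component l g = s.
Proof.
  induction l as [|[h x] l IH]; intros ND Hin; [destruct Hin|].
  inversion ND as [|? ? Hh ND']; subst; rewrite component_cons.
  destruct Hin as [E|Hin].
  - injection E as -> ->.
    destruct (group_eq_dec g g) as [_|n]; [|contradiction].
    rewrite component_notin by exact Hh; apply addr0.
  - destruct (group_eq_dec h g) as [->|_].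
    + exfalso; apply Hh; change g with (fst (g, s)); apply in_map, Hin.
    + rewrite IH by assumption; apply add0r.
Qed.

Lemma component_app (l1 l2 : list (G * S)) (g : G) :
  component (l1 ++ l2) g = radd (component l1 g) (component l2 g).
Proof. unfold component; rewrite map_app; apply rsum_app. Qed.

Lemma component_opp (l : list (G * S)) (g : G) :
  component (map (fun p => (fst p, ropp (snd p))) l) g = ropp (component l g).
Proof.
  unfold component; rewrite map_map, <- rsum_map_opp; f_equal; apply map_ext.
  intros [h x]; simpl; destruct (group_eq_dec h g); [reflexivity|].
  symmetry; apply oppr0.
Qed.

Lemma rsum_delta (D : list G) (h : G) (x : S) :
  NoDup D -> In h D ->
  rsum (map (fun g => if group_eq_dec h g then x else rzero S) D) = x.
Proof.
  intros ND; induction ND as [|d D Hd ND IH]; intros Hin; [destruct Hin|]; simpl.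
  destruct (group_eq_dec h d) as [->|ne].
  - rewrite rsum_map_eq0; [apply addr0|].
    intros g Hg; destruct (group_eq_dec d g) as [->|_]; [contradiction | reflexivity].
  - destruct Hin as [->|Hin]; [contradiction|].
    rewrite IH by exact Hin; apply add0r.
Qed.

Lemma rsum_components (l : list (G * S)) (D : list G) :
  incl (map fst l) D -> NoDup D -> rsum (map snd l) = rsum (map (component l) D).
Proof.
  induction l as [|[h x] l IH]; intros HlD ND; simpl.
  - symmetry; apply rsum_map_eq0; reflexivity.
  - transitivity (rsum (map (fun g =>
      radd (if group_eq_dec h g then x else rzero S) (component l g)) D));
      [|reflexivity].
    rewrite rsum_map_add, rsum_delta, IH; auto.
    + intros y Hy; apply HlD; right; exact Hy.
    + apply HlD; left; reflexivity.
Qed.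

(* [is_grading] only asserts directness for lists of distinct degrees;
   grouping by degree extends it to arbitrary lists. *)
Lemma grading_component_eq0 (l : list (G * S)) :
  (forall p, In p l -> C (fst p) (snd p)) ->
  rsum (map snd l) = rzero S -> forall g, component l g = rzero S.
Proof.
  intros Hl Hsum g.
  destruct HC as (Hsub & _ & _ & Hdirect).
  set (D := nodup group_eq_dec (map fst l)).
  destruct (in_dec group_eq_dec g D) as [Hg|Hg].
  - set (L := map (fun h => (h, component l h)) D).
    assert (HL : forall p, In p L -> snd p = rzero S).
    { apply Hdirect; unfold L.
      - rewrite map_map, map_id; apply NoDup_nodup.
      - intros p Hp; apply in_map_iff in Hp; destruct Hp as [h [<- _]]; simpl.
        destruct (Hsub h) as (C0 & CD & _).
        apply component_closed; auto.
        intros p Hp <-; apply Hl, Hp.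
      - rewrite map_map, <- Hsum; symmetry; apply rsum_components.
        + intros y Hy; apply nodup_In, Hy.
        + apply NoDup_nodup. }
    apply (HL (g, component l g)), in_map_iff; exists g; auto.
  - apply component_notin; intros Hin; apply Hg, nodup_In, Hin.
Qed.

Lemma grading_component_eq (l1 l2 : list (G * S)) :
  (forall p, In p l1 -> C (fst p) (snd p)) ->
  (forall p, In p l2 -> C (fst p) (snd p)) ->
  rsum (map snd l1) = rsum (map snd l2) -> forall g, component l1 g = component l2 g.
Proof.
  intros Hl1 Hl2 E g.
  set (l2' := map (fun p => (fst p, ropp (snd p))) l2).
  assert (H0 : component (l1 ++ l2') g = rzero S).
  { apply grading_component_eq0.
    - intros p Hp; apply in_app_iff in Hp; destruct Hp as [Hp|Hp]; [apply Hl1, Hp|].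
      apply in_map_iff in Hp; destruct Hp as [q [<- Hq]]; simpl.
      apply (proj1 HC (fst q)), Hl2, Hq.
    - unfold l2'; rewrite map_app, rsum_app, map_map; simpl.
      rewrite rsum_map_opp, E; apply addrN. }
  unfold l2' in H0; rewrite component_app, component_opp in H0.
  apply subr0_eq, H0.
Qed.

Lemma homogeneous_sum_mem (I : S -> Prop) (l : list (G * S)) :
  add_subgroup I -> homogeneous C I ->
  NoDup (map fst l) -> (forall p, In p l -> C (fst p) (snd p)) ->
  I (rsum (map snd l)) -> forall p, In p l -> I (snd p).
Proof.
  intros (I0 & ID & _) Hhom ND Hl Hsum [g s] Hgs; simpl.
  destruct (Hhom _ Hsum) as [lt [_ [Hlt E]]].
  rewrite <- (component_of_In l g s ND Hgs).
  rewrite (grading_component_eq l lt Hl) by (auto; intros p Hp; apply Hlt, Hp).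
  apply component_closed; auto.
  intros p Hp _; apply Hlt, Hp.
Qed.

Section Image.
Variable T : rng_ops.
Variable f : S -> T.
Hypothesis f0 : f (rzero S) = rzero T.
Hypothesis fD : forall a b, f (radd a b) = radd (f a) (f b).
Hypothesis fN : forall a, f (ropp a) = ropp (f a).
Hypothesis fM : forall a b, f (rmul a b) = rmul (f a) (f b).

Lemma rmorph_rsum (l : list S) : f (rsum l) = rsum (map f l).
Proof.
  induction l as [|x l IH]; simpl; [exact f0|].
  rewrite fD, IH; reflexivity.
Qed.

Lemma image_add_subgroup (X : S -> Prop) : add_subgroup X -> add_subgroup (image f X).
Proof.
  intros (X0 & XD & XN); split; [|split].
  - exists (rzero S); auto.
  - intros _ _ [x [Hx ->]] [y [Hy ->]]; exists (radd x y); auto.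
  - intros _ [x [Hx ->]]; exists (ropp x); auto.
Qed.

Lemma lift_image_list {A : Type} (P : A -> S -> Prop) (l : list (A * T)) :
  (forall p, In p l -> image f (P (fst p)) (snd p)) ->
  exists ls, l = map (fun p => (fst p, f (snd p))) ls /\ forall p, In p ls -> P (fst p) (snd p).
Proof.
  induction l as [|[a y] l IH]; intros Hl.
  - exists []; split; [reflexivity | intros p []].
  - destruct (Hl (a, y)) as [x [Hx Ey]]; [left; reflexivity|].
    simpl in Hx, Ey; subst y.
    destruct IH as [ls [-> Hls]]; [intros p Hp; apply Hl; right; exact Hp|].
    exists ((a, x) :: ls); split; [reflexivity|].
    intros p [<-|Hp]; auto.
Qed.

Lemma prod2_image (X Y : S -> Prop) (y : T) :
  prod2 (image f X) (image f Y) y <-> exists x, prod2 X Y x /\ y = f x.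
Proof.
  split.
  - intros [l [Hl ->]]; induction l as [|[u v] l IH].
    + exists (rzero S); split; [exists []; split; [intros p []|]|]; auto.
    + destruct (Hl (u, v)) as [[a [Ha Ea]] [b [Hb Eb]]]; [left; reflexivity|].
      cbn [fst snd] in *; subst u v.
      destruct IH as [x [[lx [Hlx ->]] Hx]]; [intros p Hp; apply Hl; right; exact Hp|].
      exists (radd (rmul a b) (rsum (map (fun p => rmul (fst p) (snd p)) lx))); split.
      * exists ((a, b) :: lx); split; [|reflexivity].
        intros p [<-|Hp]; auto.
      * simpl; rewrite fD, fM, <- Hx; reflexivity.
  - intros [x [[l [Hl ->]] ->]].
    exists (map (fun p => (f (fst p), f (snd p))) l); split.
    + intros p Hp; apply in_map_iff in Hp; destruct Hp as [q [<- Hq]].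
      destruct (Hl q Hq); split; eexists; eauto.
    + rewrite rmorph_rsum, !map_map; f_equal; apply map_ext; intros p; apply fM.
Qed.

Lemma prod3_image (X Y Z : S -> Prop) (y : T) :
  prod3 (image f X) (image f Y) (image f Z) y <-> exists x, prod3 X Y Z x /\ y = f x.
Proof.
  split.
  - intros [l [Hl ->]]; induction l as [|[[u v] w] l IH].
    + exists (rzero S); split; [exists []; split; [intros p []|]|]; auto.
    + destruct (Hl (u, v, w)) as [[a [Ha Ea]] [[b [Hb Eb]] [c [Hc Ec]]]]; [left; reflexivity|].
      cbn [fst snd] in *; subst u v w.
      destruct IH as [x [[lx [Hlx ->]] Hx]]; [intros p Hp; apply Hl; right; exact Hp|].
      exists (radd (rmul (rmul a b) c)
                (rsum (map (fun p => rmul (rmul (fst (fst p)) (snd (fst p))) (snd p)) lx))).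
      split.
      * exists ((a, b, c) :: lx); split; [|reflexivity].
        intros p [<-|Hp]; auto.
      * simpl; rewrite fD, !fM, <- Hx; reflexivity.
  - intros [x [[l [Hl ->]] ->]].
    exists (map (fun p => (f (fst (fst p)), f (snd (fst p)), f (snd p))) l); split.
    + intros p Hp; apply in_map_iff in Hp; destruct Hp as [q [<- Hq]].
      destruct (Hl q Hq) as (? & ? & ?); split; [|split]; eexists; eauto.
    + rewrite rmorph_rsum, !map_map; f_equal; apply map_ext; intros p; rewrite !fM; reflexivity.
Qed.

Lemma has_identity_image (X Y : S -> Prop) :
  has_identity (prod2 X Y) -> has_identity (prod2 (image f X) (image f Y)).
Proof.
  intros [e [He Hid]]; exists (f e); split.
  - apply prod2_image; exists e; auto.
  - intros y Hy; apply prod2_image in Hy; destruct Hy as [x [Hx ->]].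
    destruct (Hid x Hx) as [Ex Ey]; rewrite <- !fM, Ex, Ey; auto.
Qed.

Lemma epsilon_strong_image :
  epsilon_strong C -> is_grading (fun g => image f (C g)) ->
  epsilon_strong (fun g => image f (C g)).
Proof.
  intros [_ Heps] Himg; split; [exact Himg|].
  intros g; destruct (Heps g) as [H3 Hid]; split; [|apply has_identity_image, Hid].
  intros y; rewrite prod3_image; split; intros [x [Hx ->]]; exists x; split;
    auto; apply H3, Hx.
Qed.

Lemma image_grading (I : S -> Prop) :
  (forall y, exists x, y = f x) -> add_subgroup I ->
  (forall x, f x = rzero T <-> I x) -> homogeneous C I ->
  is_grading (fun g => image f (C g)).
Proof.
  intros fsurj HI Hker Hhom.
  destruct HC as (Hsub & Hmul & Hdec & _); split; [|split; [|split]].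
  - intros g; apply image_add_subgroup, Hsub.
  - intros g h _ _ [x [Hx ->]] [y [Hy ->]]; exists (rmul x y); auto.
  - intros y; destruct (fsurj y) as [x ->]; destruct (Hdec x) as [ls [ND [Hls ->]]].
    exists (map (fun p => (fst p, f (snd p))) ls); split; [|split].
    + rewrite map_map; exact ND.
    + intros p Hp; apply in_map_iff in Hp; destruct Hp as [q [<- Hq]].
      exists (snd q); split; [apply Hls, Hq | reflexivity].
    + rewrite rmorph_rsum, !map_map; reflexivity.
  - intros l ND Hl Hsum p Hp.
    destruct (lift_image_list C l Hl) as [ls [-> Hls]].
    rewrite map_map in ND, Hsum; simpl in ND, Hsum.
    apply in_map_iff in Hp; destruct Hp as [q [<- Hq]]; simpl.
    apply Hker, (homogeneous_sum_mem I ls); auto.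
    apply Hker; rewrite rmorph_rsum, map_map; exact Hsum.
Qed.

End Image.
End GradedRng.
End NonUnitalRing.

Theorem proposition3p11 (G : group_ops) (S : rng_ops) (C : G -> S -> Prop) (I : S -> Prop) :
  is_group G -> is_rng S -> epsilon_strong C ->
  is_ideal I -> homogeneous C I ->
  epsilon_strong (quot_grading C I).
Proof.
  intros _ HS Heps HI Hhom.
  pose proof (qcls_add S HS I HI) as qD.
  pose proof (qcls_opp S HS I HI) as qN.
  pose proof (qcls_mul S HS I HI) as qM.
  apply (epsilon_strong_image S G C (quot I) (qcls I) eq_refl qD qM Heps).
  apply (image_grading S HS G C (proj1 Heps) (quot I) (qcls I) eq_refl qD qN qM I).
  - intros A; exists (qrep I A); symmetry; apply qclsK.
  - exact (proj1 HI).
  - exact (qcls_kernel S HS I HI).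
  - exact Hhom.
Qed.
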